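(* Let $R$ be a connected order and let $(A,G),(B,H)\in\mathcal{D}(R)$ with $H\subset G$ and $B\supset A$. Let $J=G\cap\mu(B)$. Then $G=J\times H$ (internal direct product) and $B=A[J]$ (i.e., the natural map from the group ring $A[J]$ to $B$ is a ring isomorphism).
   Context: All rings have a unit element. An order is a commutative ring whose additive group is isomorphic to $\mathbb{Z}^n$ for some $n\geq0$; it is connected if it has exactly two idempotents. $\mu(B)$ is the group of roots of unity of $B$. For a commutative ring $R$, $\mathcal{D}(R)$ is the set of pairs $(A,G)$ with $A\subset R$ a subring and $G\subset R^*$ a subgroup such that the natural map from the group ring $A[G]$ to $R$ is a ring isomorphism. *)

From HB Require Import structures.
From mathcomp Require Import all_boot all_order all_algebra.
Set Implicit Arguments. Unset Strict Implicit. Unset Printing Implicit Defensive.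
Import GRing.Theory.
Local Open Scope ring_scope.

Section Defs.
Variable R : comNzRingType.

Definition is_order : Prop :=
  exists (n : nat) (f : R -> 'rV[int]_n),
    {morph f : x y / x + y} /\ bijective f.

Definition connected_ring : Prop :=
  exists e1 e2 : R, e1 <> e2 /\ forall e : R, e * e = e <-> (e = e1 \/ e = e2).

Definition is_subring (A : R -> Prop) : Prop :=
  [/\ A 1, (forall x y, A x -> A y -> A (x - y)) & (forall x y, A x -> A y -> A (x * y))].

Definition is_unit_subgroup (G : R -> Prop) : Prop :=
  [/\ G 1, (forall x y, G x -> G y -> G (x * y))
     & (forall g, G g -> exists h, G h /\ g * h = 1)].

(* Elements of the group ring A[G], finitely supported, are represented by
   finite lists of pairs (a, g) with a in A and g in G, standing for the
   formal sum of the a * [g]; the natural map A[G] -> R sends it to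
   \sum a * g. *)
Definition gr_eval (s : seq (R * R)) : R := \sum_(p <- s) p.1 * p.2.

Definition gr_elt (A G : R -> Prop) (s : seq (R * R)) : Prop :=
  forall p, p \in s -> A p.1 /\ G p.2.

(* Injectivity of the natural (additive, ring) map A[G] -> R: its kernel
   is trivial, i.e. a formal sum with pairwise distinct group elements
   mapping to 0 has all coefficients 0. *)
Definition nat_map_injective (A G : R -> Prop) : Prop :=
  forall s : seq (R * R), gr_elt A G s -> uniq (map snd s) ->
    gr_eval s = 0 -> forall p, p \in s -> p.1 = 0.

Definition nat_map_onto (S A G : R -> Prop) : Prop :=
  forall r, S r -> exists s : seq (R * R), gr_elt A G s /\ r = gr_eval s.

Definition group_ring_iso (S A G : R -> Prop) : Prop :=
  nat_map_injective A G /\ nat_map_onto S A G.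

Definition in_D (A G : R -> Prop) : Prop :=
  [/\ is_subring A, is_unit_subgroup G & group_ring_iso (fun _ => True) A G].

Definition mu (B : R -> Prop) (x : R) : Prop :=
  B x /\ exists n : nat, (0 < n)%N /\ x ^+ n = 1.

End Defs.

(* Write R = A[G]. Distinct elements of G are Z-linearly independent, so G is finite
   (and abelian). Let rho : R -> M_n(Z) be the regular representation and, for every
   character chi of G, let Phi_chi : R -> M_n(C) send sum_t a_t t to sum_t chi(t) rho(a_t);
   these are commuting ring morphisms. For a root of unity u of R, averaging over the finite
   group generated by the Phi_chi(u) gives a Hermitian form H >= 1 invariant under all of
   them, and orthogonality of characters turns this into sum_t Y_t^* H Y_t = H, where Y_t is
   the matrix of the coefficient u_t in A. Hence all powers of each u_t have bounded
   matrices, so some power of u_t is idempotent, i.e. 0 or 1 since R is connected. As u is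
   not nilpotent, some u_t is a root of unity; then v = u_t^-1 t^-1 u has Y_1 = 1, the
   identity forces Y_s = 0 for s <> 1, and u = u_t t.
   Applied to (B, H), every g in G (of finite order) is g = z h with z in mu(B), h in H, and
   z = g h^-1 lies in J. An x in J and H is 1, since x [1] and 1 [x] have the same image
   in B[H]. Finally, rewriting r in B, given in A[G], as an element of B[H] through g = j h
   and comparing coefficients at [1] with those of r [1] shows that r lies in A[J]. *)

From HB Require Import structures.
From mathcomp Require Import all_boot all_order all_algebra all_fingroup all_field all_character.
From mathcomp Require Import zify ring.
From Stdlib Require Import Classical IndefiniteDescription.
Set Implicit Arguments. Unset Strict Implicit. Unset Printing Implicit Defensive.
Import Order.TTheory GRing.Theory Num.Theory.
Local Open Scope ring_scope.
Local Open Scope sesquilinear_scope.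

(** * Positive semidefinite Hermitian forms *)

Section HermitianForm.
Variable n : nat.
Implicit Types (X Y Z : 'M[algC]_n) (v : 'cV[algC]_n).

Lemma trmxC_mul m p q (X : 'M[algC]_(m, p)) (Y : 'M[algC]_(p, q)) :
  (X *m Y) ^t* = Y ^t* *m X ^t*.
Proof. by rewrite trmx_mul map_mxM. Qed.

Lemma trmxC_lincomb (I : Type) (r : seq I) (c : I -> algC) p q (M : I -> 'M[algC]_(p, q)) :
  (\sum_(i <- r) c i *: M i) ^t* = \sum_(i <- r) (c i)^* *: (M i) ^t*.
Proof.
apply/matrixP => a b; rewrite !mxE summxE rmorph_sum summxE.
by apply: eq_bigr => i _; rewrite !mxE rmorphM.
Qed.

Lemma mulmx_lincomb (I J : Type) (r : seq I) (r' : seq J) (a : I -> algC) (b : J -> algC)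
    (P : I -> 'M[algC]_n) (Q : J -> 'M[algC]_n) X :
  (\sum_(i <- r) a i *: P i) *m X *m (\sum_(j <- r') b j *: Q j) =
  \sum_(i <- r) \sum_(j <- r') (a i * b j) *: (P i *m X *m Q j).
Proof.
rewrite !mulmx_suml; apply: eq_bigr => i _; rewrite mulmx_sumr; apply: eq_bigr => j _.
by rewrite -scalemxAl -scalemxAl -scalemxAr scalerA.
Qed.

Definition hform X v : algC := (v ^t* *m X *m v) 0 0.

Definition psdmx X := forall v, 0 <= hform X v.

Lemma hformD X Y v : hform (X + Y) v = hform X v + hform Y v.
Proof. by rewrite /hform mulmxDr mulmxDl mxE. Qed.

Lemma hformB X Y v : hform (X - Y) v = hform X v - hform Y v.
Proof. by rewrite /hform mulmxBr mulmxBl !mxE. Qed.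

Lemma hform0 v : hform 0 v = 0.
Proof. by rewrite /hform mulmx0 mul0mx mxE. Qed.

Lemma hform_sum I (r : seq I) (P : pred I) (F : I -> 'M_n) v :
  hform (\sum_(i <- r | P i) F i) v = \sum_(i <- r | P i) hform (F i) v.
Proof. by apply: (big_morph (hform^~ v)) => [X Y|]; rewrite ?hformD ?hform0. Qed.

Lemma hform_conj X Z v : hform (Z ^t* *m X *m Z) v = hform X (Z *m v).
Proof. by rewrite /hform trmxC_mul !mulmxA. Qed.

Lemma hform1 v : hform 1%:M v = \sum_i `|v i 0| ^+ 2.
Proof.
rewrite /hform mulmx1 mxE; apply: eq_bigr => i _.
by rewrite !mxE normCK mulrC.
Qed.

Lemma psdmx0 : psdmx 0.
Proof. by move=> v; rewrite hform0. Qed.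

Lemma psdmx1 : psdmx 1%:M.
Proof. by move=> v; rewrite hform1 sumr_ge0 // => i _; rewrite exprn_ge0. Qed.

Lemma psdmxD X Y : psdmx X -> psdmx Y -> psdmx (X + Y).
Proof. by move=> pX pY v; rewrite hformD addr_ge0. Qed.

Lemma psdmx_sum I (r : seq I) (P : pred I) (F : I -> 'M_n) :
  (forall i, P i -> psdmx (F i)) -> psdmx (\sum_(i <- r | P i) F i).
Proof. by move=> pF v; rewrite hform_sum; apply: sumr_ge0 => i /pF. Qed.

Lemma psdmx_conj X Z : psdmx X -> psdmx (Z ^t* *m X *m Z).
Proof. by move=> pX v; rewrite hform_conj. Qed.

Lemma psdmx_ge1 X : psdmx (X - 1%:M) -> psdmx X.
Proof. by move=> pX; rewrite -[X](subrK 1%:M); apply: psdmxD pX psdmx1. Qed.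

Section AboveIdentity.
Variable H : 'M[algC]_n.
Hypothesis H_ge1 : psdmx (H - 1%:M).

Lemma hform_ge1_eq0 Y : (forall v, hform (Y ^t* *m H *m Y) v = 0) -> Y = 0.
Proof.
move=> HY0; apply/matrixP => i j; rewrite mxE.
have := H_ge1 (Y *m delta_mx j 0); rewrite hformB -hform_conj HY0 sub0r oppr_ge0.
rewrite hform1 -colE => le0.
have sqY0 : \sum_k `|col j Y k 0| ^+ 2 = 0.
  by apply/eqP; rewrite eq_le le0 sumr_ge0 // => k _; rewrite exprn_ge0.
have := psumr_eq0P (fun k _ => exprn_ge0 2 (normr_ge0 (col j Y k 0))) sqY0 (i := i) isT.
by rewrite mxE => /eqP; rewrite sqrf_eq0 normr_eq0 => /eqP.
Qed.

Lemma entry_bound_contraction Z :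
  psdmx (H - Z ^t* *m H *m Z) -> forall i j, `|Z i j| ^+ 2 <= H j j.
Proof.
move=> HZ i j; pose v : 'cV[algC]_n := delta_mx j 0.
have Hv : hform H v = H j j.
  have vC : v ^t* = delta_mx 0 j.
    by apply/matrixP => a b; rewrite !mxE andbC; case: (_ && _); rewrite ?conjC0 ?conjC1.
  by rewrite /hform vC -rowE -colE !mxE.
have := HZ v; rewrite hformB hform_conj subr_ge0 Hv; apply: le_trans.
have := H_ge1 (Z *m v); rewrite hformB subr_ge0; apply: le_trans.
by rewrite hform1 (bigD1 i) //= -colE mxE lerDl sumr_ge0 // => k _; rewrite exprn_ge0.
Qed.

End AboveIdentity.

Lemma psdmx_contraction_exp H Y k :
  psdmx (H - Y ^t* *m H *m Y) -> psdmx (H - (Y ^+ k) ^t* *m H *m Y ^+ k).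
Proof.
move=> HY; elim: k => [|k IHk].
  by rewrite expr0 trmx1 map_mx1 mulmx1 mul1mx subrr; exact: psdmx0.
have -> : H - (Y ^+ k.+1) ^t* *m H *m Y ^+ k.+1 =
    (H - Y ^t* *m H *m Y) + Y ^t* *m (H - (Y ^+ k) ^t* *m H *m Y ^+ k) *m Y.
  rewrite exprSr -mulmxE trmxC_mul mulmxBr mulmxBl !mulmxA.
  by rewrite addrA subrK.
exact/psdmxD/psdmx_conj.
Qed.

End HermitianForm.

Section InvariantForm.
Variables (n m : nat) (I : eqType) (alpha : I -> 'M[algC]_n).
Hypotheses (m_gt0 : (0 < m)%N) (alpham : forall i, alpha i ^+ m = 1).
Hypothesis alphaC : forall i j, alpha i * alpha j = alpha j * alpha i.

(* Averaging over the cyclic groups generated by the [alpha i] one after the other; the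
   result is invariant under all of them because they commute. *)
Fixpoint avg_form (s : seq I) : 'M[algC]_n :=
  if s is i :: s' then \sum_(k < m) (alpha i ^+ k) ^t* *m avg_form s' *m alpha i ^+ k
  else 1%:M.

Lemma avg_form_ge1 s : psdmx (avg_form s - 1%:M).
Proof.
elim: s => [|i s IHs] /=; first by rewrite subrr; exact: psdmx0.
case: m m_gt0 => // m' _; rewrite big_ord_recl /= expr0 trmx1 map_mx1 mulmx1 mul1mx addrAC.
by apply: psdmxD => //; apply: psdmx_sum => k _; apply/psdmx_conj/psdmx_ge1.
Qed.

Lemma conj_commute (X Y K : 'M[algC]_n) : X * Y = Y * X ->
  Y ^t* *m (X ^t* *m K *m X) *m Y = X ^t* *m (Y ^t* *m K *m Y) *m X.
Proof.
move=> XY; have conjM P Q : Q ^t* *m (P ^t* *m K *m P) *m Q = (P *m Q) ^t* *m K *m (P *m Q).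
  by rewrite trmxC_mul !mulmxA.
by rewrite !conjM !mulmxE XY.
Qed.

Lemma avg_form_invariant s j : j \in s -> (alpha j) ^t* *m avg_form s *m alpha j = avg_form s.
Proof.
elim: s => [|i s IHs] //= js; rewrite mulmx_sumr mulmx_suml.
have swap k K : alpha j ^t* *m ((alpha i ^+ k) ^t* *m K *m alpha i ^+ k) *m alpha j =
    (alpha i ^+ k) ^t* *m (alpha j ^t* *m K *m alpha j) *m alpha i ^+ k.
  by apply: conj_commute; apply/esym/commrX/alphaC.
transitivity (\sum_(k < m)
    (alpha i ^+ k) ^t* *m (alpha j ^t* *m avg_form s *m alpha j) *m alpha i ^+ k).
  by apply: eq_bigr => k _; apply: swap.
have [->|ji] := eqVneq j i; last by move: js; rewrite inE (negPf ji) => /IHs ->.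
transitivity (\sum_(k < m) (alpha i ^+ k.+1) ^t* *m avg_form s *m alpha i ^+ k.+1).
  by apply: eq_bigr => k _; rewrite exprS -mulmxE trmxC_mul !mulmxA.
case: m m_gt0 alpham => // m' _ alpham'.
by rewrite big_ord_recr big_ord_recl /= alpham' expr0 addrC.
Qed.

End InvariantForm.

(** * Orders embed in integer matrix rings *)

Lemma order_additive_coordinates (R : comNzRingType) : is_order R ->
  exists n (coord : {additive R -> 'rV[int]_n}), bijective coord.
Proof.
move=> [n [f [fD fbij]]].
have f_zmod : zmod_morphism f.
  have f0 : f 0 = 0 by apply: (addrI (f 0)); rewrite -fD !addr0.
  by move=> x y; rewrite -[LHS]addr0 -(subrr (f y)) addrA -fD subrK.
by exists n, (HB.pack_for {additive R -> 'rV[int]_n} f (GRing.isZmodMorphism.Build _ _ f f_zmod)).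
Qed.

Section OrderCoordinates.
Variables (R : comNzRingType) (n : nat).
Variables (coord : {additive R -> 'rV[int]_n}) (uncoord : 'rV[int]_n -> R).
Hypotheses (coordK : cancel coord uncoord) (uncoordK : cancel uncoord coord).

Lemma coord_inj : injective coord. Proof. exact: can_inj coordK. Qed.

Lemma uncoord_is_zmod_morphism : zmod_morphism uncoord.
Proof. by move=> u v; apply: coord_inj; rewrite raddfB !uncoordK. Qed.
HB.instance Definition _ :=
  GRing.isZmodMorphism.Build 'rV[int]_n R uncoord uncoord_is_zmod_morphism.

Definition lmulmx (a : R) : 'M[int]_n := \matrix_(i, j) coord (a * uncoord 'e_i) 0 j.

Lemma coord_mul a x : coord (a * x) = coord x *m lmulmx a.
Proof.
rewrite mulmx_sum_row -{1}[x]coordK {1}[coord x]row_sum_delta.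
rewrite raddf_sum mulr_sumr raddf_sum; apply: eq_bigr => j _.
rewrite -[coord x 0 j]intz !scaler_int raddfMz mulrzAr raddfMz; congr (_ *~ _).
by apply/rowP => k; rewrite !mxE.
Qed.

Lemma lmulmx_eq (P Q : 'M[int]_n) : (forall x, coord x *m P = coord x *m Q) -> P = Q.
Proof.
by move=> PQ; apply/row_matrixP => i; rewrite !rowE -[delta_mx 0 i]uncoordK PQ.
Qed.

Lemma lmulmx_is_zmod_morphism : zmod_morphism lmulmx.
Proof.
by move=> a b; apply: lmulmx_eq => x; rewrite -coord_mul mulrBl raddfB !coord_mul mulmxBr.
Qed.
HB.instance Definition _ :=
  GRing.isZmodMorphism.Build R 'M[int]_n lmulmx lmulmx_is_zmod_morphism.

Lemma lmulmx_is_monoid_morphism : monoid_morphism lmulmx.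
Proof.
split; first by apply: lmulmx_eq => x; rewrite -coord_mul mul1r mulmx1.
move=> a b; apply: lmulmx_eq => x.
by rewrite -mulmxE mulmxA -!coord_mul mulrCA mulrA.
Qed.
HB.instance Definition _ :=
  GRing.isMonoidMorphism.Build R 'M[int]_n lmulmx lmulmx_is_monoid_morphism.

Lemma lmulmx_inj : injective lmulmx.
Proof. by move=> a b ab; apply: coord_inj; rewrite -[a]mulr1 -[b]mulr1 !coord_mul ab. Qed.

Lemma regular_representation : exists rho : {rmorphism R -> 'M[int]_n}, injective rho.
Proof. by exists (GRing.RMorphism.clone _ _ lmulmx _); exact: lmulmx_inj. Qed.

End OrderCoordinates.

Lemma order_matrix_embedding (R : comNzRingType) : is_order R ->
  exists n (rho : {rmorphism R -> 'M[int]_n}), injective rho.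
Proof.
move=> /order_additive_coordinates [n [coord [uncoord coordK uncoordK]]].
by exists n; exact: regular_representation coordK uncoordK.
Qed.

Section Subring.
Variables (R : comNzRingType) (A : R -> Prop).
Hypothesis subA : is_subring A.

Lemma subring0 : A 0.
Proof. by case: subA => A1 AB _; rewrite -(subrr 1); apply: AB. Qed.

Lemma subringN x : A x -> A (- x).
Proof. by case: subA => _ AB _ Ax; rewrite -sub0r; apply: AB => //; apply: subring0. Qed.

Lemma subringD x y : A x -> A y -> A (x + y).
Proof. by case: subA => _ AB _ Ax Ay; rewrite -[y]opprK; apply/AB/subringN. Qed.

Lemma subring_sum I (r : seq I) (P : pred I) (F : I -> R) :
  (forall i, P i -> A (F i)) -> A (\sum_(i <- r | P i) F i).
Proof. by move=> AF; apply: big_ind => //; [exact: subring0 | exact: subringD]. Qed.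

Lemma subringX x k : A x -> A (x ^+ k).
Proof.
by case: subA => A1 _ AM Ax; elim: k => [|k IHk]; rewrite ?expr0 // exprS; apply: AM.
Qed.

Lemma subring_intr (z : int) : A z%:~R.
Proof.
have subring_natr k : A k%:R.
  by elim: k => [|k IHk]; [exact: subring0 | rewrite -addn1 natrD; apply: subringD; case: subA].
by case: z => k; rewrite ?NegzE ?mulrNz; [|apply: subringN]; apply: subring_natr.
Qed.

End Subring.

Section NilpotentPowers.
Variable R : comNzRingType.

Lemma expr_eq0_ge (a : R) p k : a ^+ p = 0 -> (p <= k)%N -> a ^+ k = 0.
Proof. by move=> ap0 pk; rewrite -(subnKC pk) exprD ap0 mul0r. Qed.

Lemma nilpotentD (a b : R) p q : a ^+ p = 0 -> b ^+ q = 0 -> (a + b) ^+ (p + q) = 0.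
Proof.
move=> ap0 bq0; rewrite exprDn big1 // => i _.
have [qi|iq] := leqP q i; first by rewrite (expr_eq0_ge bq0 qi) mulr0 mul0rn.
by rewrite (@expr_eq0_ge a p) ?mul0r ?mul0rn //; lia.
Qed.

Lemma nilpotent_sum I (r : seq I) (F : I -> R) :
  (forall i, exists k, F i ^+ k = 0) -> exists k, (\sum_(i <- r) F i) ^+ k = 0.
Proof.
move=> nilF; elim: r => [|i r [k IHk]]; first by exists 1%N; rewrite big_nil expr1.
by have [p Fp] := nilF i; exists (p + k)%N; rewrite big_cons; apply: nilpotentD.
Qed.

Lemma expr_repeat_idem (a : R) i j : (i < j)%N -> a ^+ i = a ^+ j ->
  exists2 k, (0 < k)%N & a ^+ k * a ^+ k = a ^+ k.
Proof.
move=> ij aij; set p := (j - i)%N.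
have aip : a ^+ (i + p) = a ^+ i by rewrite subnKC ?(ltnW ij).
have a_period q : forall r, a ^+ (r + i + q * p) = a ^+ (r + i).
  elim: q => [|q IHq] r; first by rewrite addn0.
  rewrite mulSn (_ : (r + i + (p + q * p) = r + p + i + q * p)%N); last by lia.
  by rewrite IHq -addnA exprD [(p + i)%N]addnC aip -exprD.
exists (i.+1 * p)%N; first by rewrite muln_gt0 subn_gt0 ij.
rewrite -exprD (_ : (i.+1 * p + i.+1 * p = (i.+1 * p - i) + i + i.+1 * p)%N).
  by rewrite a_period subnK // (leq_trans (leqnSn i)) // leq_pmulr ?subn_gt0.
have : (0 < p)%N by rewrite subn_gt0.
by nia.
Qed.

End NilpotentPowers.

Lemma int_rows_dependent m n (V : 'M[int]_(m, n)) :
  (n < m)%N -> exists2 w : 'rV[int]_m, w != 0 & w *m V = 0.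
Proof.
move=> nm; pose VQ := map_mx (intr : int -> rat) V.
have [w w0 wV] : exists2 w : 'rV[rat]_m, w != 0 & w *m VQ = 0.
  have kerVQ0 : kermx VQ != 0.
    rewrite kermx_eq0; apply/negP => /eqP rkVQ.
    by have := rank_leq_col VQ; rewrite rkVQ leqNgt nm.
  have [i kerVQi] : exists i, row i (kermx VQ) != 0.
    apply/existsP; apply: contraR kerVQ0 => /existsPn kerVQ0; apply/eqP/row_matrixP => i.
    by rewrite row0; apply/eqP/negPn/kerVQ0.
  by exists (row i (kermx VQ)); rewrite // -row_mul mulmx_ker row0.
pose d : int := \prod_j denq (w 0 j).
pose wZ : 'rV[int]_m := \row_j (numq (w 0 j) * \prod_(k | k != j) denq (w 0 k)).
have d0 : (d%:~R : rat) != 0.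
  by rewrite intr_eq0; apply/prodf_neq0 => k _; rewrite denq_neq0.
have wZE : map_mx intr wZ = (d%:~R : rat) *: w.
  apply/rowP => j; rewrite !mxE /d [in RHS](bigD1 j) //= !intrM numqE.
  by rewrite [RHS]mulrC mulrA.
exists wZ.
  apply: contra w0 => /eqP wZ0; move: wZE; rewrite wZ0 map_mx0 => /esym/eqP.
  by rewrite scaler_eq0 (negPf d0).
have wZV : map_mx intr (wZ *m V) = 0 :> 'rV[rat]_n.
  by rewrite map_mxM wZE -scalemxAl wV scaler0.
apply/rowP => j; have := congr1 (fun M : 'rV[rat]_n => M 0 j) wZV.
by rewrite !mxE => /eqP; rewrite intr_eq0 => /eqP.
Qed.

Lemma finite_of_uniq_size_le (T : eqType) (P : T -> Prop) N :
  (forall s, uniq s -> (forall x, x \in s -> P x) -> (size s <= N)%N) ->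
  exists s, uniq s /\ forall x, P x <-> x \in s.
Proof.
move=> sizeP; apply: NNPP => noP.
suff grow k : exists s, [/\ uniq s, forall x, x \in s -> P x & size s = k].
  by have [s [us /(sizeP s us) sN sizes]] := grow N.+1; rewrite sizes ltnn in sN.
elim: k => [|k [s [us sP <-]]]; first by exists [::].
have [x [Px xs]] : exists x, P x /\ x \notin s.
  apply: NNPP => noX; apply: noP; exists s; split => // x; split; last exact: sP.
  by move=> Px; apply: NNPP => xs; apply: noX; exists x; split => //; apply/negP.
exists (x :: s); split => //=; first by rewrite xs.
by move=> y; rewrite inE => /orP [/eqP -> | /sP].
Qed.

Section FiniteBasis.
Variables (R : comNzRingType) (n : nat) (rho : {rmorphism R -> 'M[int]_n}).
Hypothesis rho_inj : injective rho.
Variables (A G : R -> Prop).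
Hypotheses (subA : is_subring A) (injAG : nat_map_injective A G).

Lemma intr_eq0_embedded (z : int) : z%:~R = 0 :> R -> z = 0.
Proof.
move=> z0; have n_gt0 : (0 < n)%N.
  case: n rho rho_inj => // rho0 rho0_inj; have /eqP := oner_neq0 R.
  by case; apply: rho0_inj; apply/matrixP => -[].
have /matrixP/(_ (Ordinal n_gt0) (Ordinal n_gt0)) := congr1 rho z0.
by rewrite rmorph_int raddf0 -[z%:~R]mulr1 mulrzl -scaler_int !mxE eqxx mulr1 intz.
Qed.

Lemma nat_map_injective_size_le s :
  uniq s -> (forall x, x \in s -> G x) -> (size s <= n * n)%N.
Proof.
move=> us sG; rewrite leqNgt; apply/negP => /int_rows_dependent.
move=> /(_ (\matrix_i mxvec (rho (nth 0 s i)))) [w w0 wV].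
pose L := [seq (((w 0 i)%:~R : R), nth 0 s i) | i <- index_enum 'I_(size s)].
have LAG : gr_elt A G L.
  by move=> p /mapP [i _ ->]; split; [apply: subring_intr | apply/sG/mem_nth].
have uL : uniq (map snd L).
  rewrite -map_comp map_inj_in_uniq ?index_enum_uniq // => i j _ _ /= sij.
  by apply/val_inj/eqP; rewrite -(nth_uniq 0 _ _ us) ?ltn_ord ?sij.
have L0 : gr_eval L = 0.
  apply: rho_inj; apply: (can_inj (@mxvecK _ n n)).
  rewrite /gr_eval big_map !raddf0 -wV !raddf_sum mulmx_sum_row; apply: eq_bigr => i _ /=.
  by rewrite rmorphM rmorph_int mulrzl -scaler_int intz rowK linearZ.
case/eqP: w0; apply/rowP => i; rewrite mxE; apply: intr_eq0_embedded.
apply: (injAG LAG uL L0 (p := ((w 0 i)%:~R, nth 0 s i))).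
by apply/mapP; exists i; rewrite ?mem_index_enum.
Qed.

Lemma nat_map_injective_finite : exists s, uniq s /\ forall x, G x <-> x \in s.
Proof. exact: finite_of_uniq_size_le nat_map_injective_size_le. Qed.

End FiniteBasis.

Lemma bounded_intmx_repeat m n (M : nat -> 'M[int]_(m, n)) B :
  (forall k i j, (absz (M k i j) < B)%N) -> exists i j, (i < j)%N /\ M i = M j.
Proof.
move=> MB; pose code k : {ffun 'I_m * 'I_n -> 'I_(B + B).+1} :=
  [ffun ij => inord (absz (M k ij.1 ij.2 + B%:Z))].
have code_inj k1 k2 : code k1 = code k2 -> M k1 = M k2.
  move=> /ffunP c12; apply/matrixP => i j; move/(congr1 val): (c12 (i, j)).
  by rewrite !ffunE /= !inordK; have := MB k1 i j; have := MB k2 i j; lia.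
pose K := #|{ffun 'I_m * 'I_n -> 'I_(B + B).+1}|.
have /injectivePn [x [y xy /code_inj Mxy]] : ~~ injectiveb (fun k : 'I_K.+1 => code k).
  by apply/injectiveP => /leq_card; rewrite card_ord ltnn.
have [ltxy|ltyx|eqxy] := ltngtP x y; first by exists x, y.
  by exists y, x.
by case/eqP: xy; apply: val_inj.
Qed.

Lemma absz_lt_of_sqr_lt (z : int) (B : nat) : `|(z%:~R : algC)| ^+ 2 < B%:R -> (absz z < B)%N.
Proof.
rewrite -intr_norm -abszE -natrX ltr_nat; apply: leq_ltn_trans.
by case: (absz z) => // k; rewrite expnS leq_pmulr // expn_gt0.
Qed.

(** * Roots of unity in a group ring over a finite group *)

Section FiniteGroupRing.
Variables (R : comNzRingType) (A G : R -> Prop).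
Hypotheses (subA : is_subring A) (subgG : is_unit_subgroup G).
Hypotheses (injAG : nat_map_injective A G) (ontoAG : nat_map_onto (fun _ => True) A G).
Variable l : seq R.
Hypothesis lG : forall x, G x <-> x \in l.

Lemma mem1_units : (1 : R) \in l.
Proof. by case: subgG => G1 _ _; apply/lG. Qed.

Lemma memM_units x y : x \in l -> y \in l -> x * y \in l.
Proof. by case: subgG => _ GM _ /lG Gx /lG Gy; apply/lG/GM. Qed.

Lemma memV_units x : x \in l -> exists y, (y \in l) && (x * y == 1).
Proof. by case: subgG => _ _ GV /lG /GV [y [/lG ly xy]]; exists y; rewrite ly xy eqxx. Qed.

Definition unit_group := seq_sub l.
HB.instance Definition _ := Finite.copy unit_group (seq_sub l).
HB.instance Definition _ := SubType.copy unit_group (seq_sub l).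
Local Notation gT := unit_group.

Definition gmul (s t : gT) : gT := SeqSub (memM_units (ssvalP s) (ssvalP t)).
Definition gone : gT := SeqSub mem1_units.
Definition ginv (s : gT) : gT := SeqSub (proj1 (andP (xchooseP (memV_units (ssvalP s))))).

Lemma val_mulginv (s : gT) : val s * val (ginv s) = 1.
Proof. exact: (eqP (proj2 (andP (xchooseP (memV_units (ssvalP s)))))). Qed.

Lemma gmulA : associative gmul.
Proof. by move=> s t u; apply: val_inj; rewrite /= mulrA. Qed.

Lemma gmul1 : left_id gone gmul.
Proof. by move=> s; apply: val_inj; rewrite /= mul1r. Qed.

Lemma gmulV : left_inverse gone ginv gmul.
Proof. by move=> s; apply: val_inj; rewrite /= mulrC val_mulginv. Qed.

HB.instance Definition _ := Finite_isGroup.Build gT gmulA gmul1 gmulV.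

Lemma unit_group_abelian : abelian [set: gT].
Proof. by apply/centsP => s _ t _; apply/val_inj/mulrC. Qed.

Lemma valM (s t : gT) : val (s * t)%g = val s * val t. Proof. by []. Qed.

Lemma valX (s : gT) k : val (s ^+ k)%g = val s ^+ k.
Proof. by elim: k => [|k IHk]; rewrite ?expg0 ?expr0 // expgS valM IHk exprS. Qed.

Lemma val_order (s : gT) : val s ^+ #[s]%g = 1.
Proof. by rewrite -valX expg_order. Qed.

Lemma G_val (s : gT) : G (val s). Proof. exact/lG/ssvalP. Qed.

Lemma val_onto x : G x -> exists s : gT, val s = x.
Proof. by move=> /lG lx; exists (SeqSub lx). Qed.

Lemma coef_unique0 (c : gT -> R) : (forall t, A (c t)) ->
  \sum_t c t * val t = 0 -> forall t, c t = 0.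
Proof.
move=> cA c0 t; pose L := [seq (c t, val t) | t <- index_enum gT].
have LAG : gr_elt A G L by move=> p /mapP [s _ ->]; split; [exact: cA | exact: G_val].
have uL : uniq (map snd L) by rewrite -map_comp map_inj_uniq ?index_enum_uniq //; exact: val_inj.
have L0 : gr_eval L = 0 by rewrite /gr_eval big_map.
by apply: (injAG LAG uL L0 (p := (c t, val t))); apply/mapP; exists t; rewrite ?mem_index_enum.
Qed.

Lemma coef_exists r : exists c : {ffun gT -> R}, (forall t, A (c t)) /\ r = \sum_t c t * val t.
Proof.
have [s [sAG ->]] := ontoAG (r := r) I; elim: s sAG => [|[a x] s IHs] sAG.
  exists [ffun=> 0]; split => [t|]; first by rewrite ffunE; exact: subring0.
  by rewrite /gr_eval big_nil big1 // => t _; rewrite ffunE mul0r.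
have [c [cA cE]] : exists c : {ffun gT -> R}, (forall t, A (c t)) /\ gr_eval s = \sum_t c t * val t.
  by apply: IHs => q qs; apply: sAG; rewrite inE qs orbT.
have [/= Aa /val_onto [t0 x0]] := sAG (a, x) (mem_head _ _).
exists [ffun t => c t + (if t == t0 then a else 0)]; split.
  by move=> t; rewrite ffunE; apply: subringD => //; case: ifP => _ //; exact: subring0.
under [RHS]eq_bigr => t _ do rewrite ffunE mulrDl.
rewrite /gr_eval big_cons -/(gr_eval s) cE big_split /= [RHS]addrC; congr (_ + _).
by rewrite (bigD1 t0) //= eqxx x0 big1 ?addr0 // => t /negPf ->; rewrite mul0r.
Qed.

Definition coef (r : R) : {ffun gT -> R} :=
  proj1_sig (constructive_indefinite_description _ (coef_exists r)).

Lemma coefA r t : A (coef r t).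
Proof. exact: (proj1 (proj2_sig (constructive_indefinite_description _ (coef_exists r))) t). Qed.

Lemma coefE r : r = \sum_t coef r t * val t.
Proof. exact: (proj2 (proj2_sig (constructive_indefinite_description _ (coef_exists r)))). Qed.

Lemma coef_unique r (c : gT -> R) : (forall t, A (c t)) -> r = \sum_t c t * val t ->
  forall t, coef r t = c t.
Proof.
move=> cA rE t; apply/eqP; rewrite -subr_eq0; apply/eqP; move: t.
apply: (coef_unique0 (c := fun t => coef r t - c t)) => [t|].
  by case: subA => _ AB _; apply: AB => //; exact: coefA.
by under eq_bigr => t _ do rewrite mulrBl; rewrite sumrB -coefE -rE subrr.
Qed.

Lemma coef_inj r q : coef r =1 coef q -> r = q.
Proof. by move=> rq; rewrite [r]coefE [q]coefE; apply: eq_bigr => t _; rewrite rq. Qed.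

Lemma coefD r q t : coef (r + q) t = coef r t + coef q t.
Proof.
apply: (coef_unique (c := fun s => coef r s + coef q s)) => [s|].
  by apply: subringD => //; exact: coefA.
by under eq_bigr => s _ do rewrite mulrDl; rewrite big_split -!coefE.
Qed.

Lemma coefB r q t : coef (r - q) t = coef r t - coef q t.
Proof.
apply: (coef_unique (c := fun s => coef r s - coef q s)) => [s|].
  by case: subA => _ AB _; apply: AB; exact: coefA.
by under eq_bigr => s _ do rewrite mulrBl; rewrite sumrB -!coefE.
Qed.

Lemma coef0 t : coef 0 t = 0.
Proof.
apply: (coef_unique (c := fun=> 0)) => [s|]; first exact: subring0.
by rewrite big1 // => s _; rewrite mul0r.
Qed.

Lemma coef_sum I (r : seq I) (F : I -> R) t :
  coef (\sum_(i <- r) F i) t = \sum_(i <- r) coef (F i) t.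
Proof. by apply: (big_morph (coef^~ t)) => [x y|]; rewrite ?coefD ?coef0. Qed.

Lemma coef1 t : coef 1 t = (t == 1%g)%:R.
Proof.
apply: (coef_unique (c := fun s => (s == 1%g)%:R)) => [s|].
  by case: subA => A1 _ _; case: (s == 1%g); [exact: A1 | exact: subring0].
by rewrite (bigD1 1%g) //= eqxx mul1r big1 ?addr0 // => s /negPf ->; rewrite mul0r.
Qed.

Lemma coefMl a r t : A a -> coef (a * r) t = a * coef r t.
Proof.
move=> Aa; apply: (coef_unique (c := fun s => a * coef r s)) => [s|].
  by case: subA => _ _ AM; apply: AM => //; exact: coefA.
by rewrite {1}[r]coefE mulr_sumr; apply: eq_bigr => s _; rewrite mulrA.
Qed.

Lemma coefMg (s : gT) r t : coef (val s * r) t = coef r (s^-1 * t)%g.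
Proof.
apply: (coef_unique (c := fun u => coef r (s^-1 * u)%g)) => [u|]; first exact: coefA.
rewrite {1}[r]coefE mulr_sumr (reindex_inj (mulgI s^-1)%g) /=.
apply: eq_bigr => u _; rewrite mulrCA; congr (_ * _).
by rewrite mulrA; have /= -> := val_mulginv s; rewrite mul1r.
Qed.

Lemma coefM r q t : coef (r * q) t = \sum_s coef r s * coef q (s^-1 * t)%g.
Proof.
rewrite {1}[r]coefE mulr_suml coef_sum; apply: eq_bigr => s _.
by rewrite -mulrA coefMl ?coefMg //; exact: coefA.
Qed.

Local Notation Irr := (Iirr [set: gT]).

Lemma chiM (i : Irr) (s t : gT) : 'chi_i (s * t)%g = 'chi_i s * 'chi_i t.
Proof. by rewrite (lin_charM (char_abelianP _ unit_group_abelian i)) ?inE. Qed.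

Lemma chi1 (i : Irr) : 'chi_i 1%g = 1.
Proof. exact: lin_char1 (char_abelianP _ unit_group_abelian i). Qed.

Lemma chi_orthogonality (s t : gT) :
  \sum_(i : Irr) ('chi_i s)^* * 'chi_i t = #|[set: gT]|%:R *+ (s == t).
Proof.
under eq_bigr => i _ do rewrite mulrC.
rewrite second_orthogonality_relation ?inE //.
have -> : 'C_[set: gT][t]%g = [set: gT].
  by apply/setP => y; rewrite in_setI in_setT /=; apply/cent1P/val_inj/mulrC.
have /abelian_classP classG := unit_group_abelian.
by rewrite classG ?inE // eq_sym.
Qed.

Variables (n : nat) (rho : {rmorphism R -> 'M[int]_n}).

Definition rhoC (a : R) : 'M[algC]_n := map_mx intr (rho a).
HB.instance Definition _ := GRing.RMorphism.copy rhoC (map_mx intr \o rho).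

Definition fourier (i : Irr) (r : R) : 'M[algC]_n := \sum_t 'chi_i t *: rhoC (coef r t).

Lemma fourier_is_zmod_morphism i : zmod_morphism (fourier i).
Proof.
move=> r q; rewrite /fourier -sumrB; apply: eq_bigr => t _.
by rewrite coefB raddfB scalerBr.
Qed.

Lemma fourier_is_monoid_morphism i : monoid_morphism (fourier i).
Proof.
split.
  rewrite /fourier (bigD1 1%g) //= coef1 eqxx rmorph1 chi1 scale1r big1 ?addr0 // => t /negPf t1.
  by rewrite coef1 t1 raddf0 scaler0.
move=> r q; rewrite /fourier mulr_suml.
under eq_bigr => t _ do rewrite coefM raddf_sum scaler_sumr.
rewrite exchange_big /=; apply: eq_bigr => s _.
rewrite mulr_sumr (reindex_inj (mulgI s)) /=; apply: eq_bigr => t _.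
by rewrite mulKg rmorphM chiM -!mulmxE -scalemxAl -scalemxAr scalerA.
Qed.

HB.instance Definition _ i :=
  GRing.isZmodMorphism.Build R 'M[algC]_n (fourier i) (fourier_is_zmod_morphism i).
HB.instance Definition _ i :=
  GRing.isMonoidMorphism.Build R 'M[algC]_n (fourier i) (fourier_is_monoid_morphism i).

Lemma fourierC i j r q : fourier i r * fourier j q = fourier j q * fourier i r.
Proof.
rewrite /fourier mulr_suml mulr_sumr; apply: eq_bigr => s _.
rewrite mulr_suml mulr_sumr; apply: eq_bigr => t _.
rewrite -!mulmxE -!scalemxAl -!scalemxAr !scalerA mulrC; congr (_ *: _).
by rewrite !mulmxE -!rmorphM mulrC.
Qed.

Hypothesis rho_inj : injective rho.

Lemma rhoC_inj : injective rhoC.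
Proof.
move=> a b /matrixP ab; apply/rho_inj/matrixP => i j.
by apply/(@intr_inj algC); have := ab i j; rewrite !mxE.
Qed.

Hypothesis idemR : forall e : R, e * e = e -> e = 0 \/ e = 1.

Section RootOfUnity.
Variables (u : R) (m : nat).
Hypotheses (m_gt0 : (0 < m)%N) (um : u ^+ m = 1).

Definition uform := avg_form m (fourier^~ u) (enum Irr).

Local Notation coefmx t := (rhoC (coef u t)).

Lemma uform_ge1 : psdmx (uform - 1%:M).
Proof. exact: avg_form_ge1. Qed.

(* Orthogonality of characters turns the invariance of [uform] under every [fourier i u]
   into this identity. *)
Lemma uform_parseval : \sum_t (coefmx t) ^t* *m uform *m coefmx t = uform.
Proof.
have inv_uform i : (fourier i u) ^t* *m uform *m fourier i u = uform.
  rewrite /uform; apply: (@avg_form_invariant n m _ (fourier^~ u) m_gt0) => [j|j k|].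
  - by rewrite -rmorphXn um rmorph1.
  - exact: fourierC.
  - by rewrite mem_enum.
have card_gt0 : (#|[set: gT]|%:R : algC) != 0.
  by rewrite pnatr_eq0 -lt0n cardsT; apply/card_gt0P; exists 1%g.
apply: (scalerI card_gt0).
transitivity (\sum_i (fourier i u) ^t* *m uform *m fourier i u); last first.
  rewrite (eq_bigr _ (fun i _ => inv_uform i)) sumr_const.
  by rewrite card_Iirr_abelian ?unit_group_abelian // scaler_nat.
rewrite scaler_sumr /fourier.
transitivity (\sum_s \sum_t \sum_(i : Irr)
    (('chi_i s)^* * 'chi_i t) *: (coefmx s ^t* *m uform *m coefmx t)).
  apply: eq_bigr => s _; rewrite [RHS](bigD1 s) //= -scaler_suml chi_orthogonality eqxx.
  rewrite big1 ?addr0 // => t ts.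
  by rewrite -scaler_suml chi_orthogonality eq_sym (negPf ts) mulr0n scale0r.
transitivity (\sum_(i : Irr) \sum_s \sum_t
    (('chi_i s)^* * 'chi_i t) *: (coefmx s ^t* *m uform *m coefmx t)); last first.
  by apply: eq_bigr => i _; rewrite trmxC_lincomb mulmx_lincomb.
by rewrite [RHS]exchange_big; apply: eq_bigr => s _; rewrite [RHS]exchange_big.
Qed.

Lemma coefmx_contraction t : psdmx (uform - (coefmx t) ^t* *m uform *m coefmx t).
Proof.
rewrite -{1}uform_parseval (bigD1 t) //= addrC addrK.
by apply: psdmx_sum => s _; apply/psdmx_conj/psdmx_ge1/uform_ge1.
Qed.

Definition coef_bound : nat := \sum_j Num.Def.archi_bound (uform j j).

Lemma coef_expr_bound t k i j : (absz (rho (coef u t ^+ k) i j) < coef_bound)%N.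
Proof.
have := entry_bound_contraction uform_ge1 (psdmx_contraction_exp k (coefmx_contraction t)) i j.
rewrite -rmorphXn mxE => uform_jj; apply: absz_lt_of_sqr_lt.
have uform_jj_ge0 : 0 <= uform j j by apply: le_trans uform_jj; rewrite exprn_ge0.
apply: (le_lt_trans uform_jj); apply: (lt_le_trans (archi_boundP uform_jj_ge0)).
by rewrite ler_nat /coef_bound (bigD1 j) //= leq_addr.
Qed.

Lemma coef_expr_repeat t : exists i j, (i < j)%N /\ coef u t ^+ i = coef u t ^+ j.
Proof.
have [i [j [ij /rho_inj coefij]]] := bounded_intmx_repeat (coef_expr_bound t).
by exists i, j.
Qed.

(* Otherwise every coefficient would have a power equal to the idempotent 0, and [u]
   would be nilpotent. *)
Lemma coef_root_of_unity : exists t k, (0 < k)%N /\ coef u t ^+ k = 1.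
Proof.
apply: NNPP => no_root.
have coef_nil t : exists k, (coef u t * val t) ^+ k = 0.
  have [i [j [ij /(expr_repeat_idem ij) [k k_gt0 /idemR [coefk0|coefk1]]]]] := coef_expr_repeat t.
    by exists k; rewrite exprMn coefk0 mul0r.
  by case: no_root; exists t, k.
have [k uk0] := nilpotent_sum (index_enum gT) coef_nil; rewrite -coefE in uk0.
have /eqP := oner_neq0 R; case.
by rewrite -(expr1n _ k) -um -exprM mulnC exprM uk0 expr0n eqn0Ngt m_gt0.
Qed.

Lemma coef1_eq1 : coef u 1%g = 1 -> u = 1.
Proof.
move=> coefu1; have := uform_parseval; rewrite (bigD1 1%g) //=.
set c1 := rhoC (coef u _); have -> : c1 = 1 by rewrite -(rmorph1 rhoC); congr rhoC; exact: coefu1.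
rewrite trmx1 map_mx1 mulmx1 mul1mx -[RHS]addr0 => /addrI rest0.
have coefmx0 t : t != 1%g -> coefmx t = 0.
  move=> t1; apply: (hform_ge1_eq0 uform_ge1) => v.
  have rest_ge0 s : s != 1%g -> 0 <= hform ((coefmx s) ^t* *m uform *m coefmx s) v.
    by move=> _; apply/psdmx_conj/psdmx_ge1/uform_ge1.
  by apply: (psumr_eq0P rest_ge0) => //; rewrite -hform_sum rest0 hform0.
apply: coef_inj => t; rewrite coef1.
have [->|t1] := eqVneq t 1%g; first exact: coefu1.
by apply: rhoC_inj; rewrite raddf0 coefmx0.
Qed.

End RootOfUnity.

Lemma units_torsion x : G x -> exists k, (0 < k)%N /\ x ^+ k = 1.
Proof. by move=> /val_onto [t <-]; exists #[t]%g; rewrite order_gt0 val_order. Qed.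

Lemma root_of_unity_decomp u m : (0 < m)%N -> u ^+ m = 1 ->
  exists z x, [/\ mu A z, G x & u = z * x].
Proof.
move=> m_gt0 um; have [t0 [k [k_gt0 ak]]] := coef_root_of_unity m_gt0 um.
set a := coef u t0 in ak; pose a' := a ^+ k.-1.
have a'a : a' * a = 1 by rewrite -exprSr prednK.
pose v := val t0^-1%g * (a' * u).
pose o := #[t0^-1]%g.
have vk : v ^+ (o * k * m) = 1.
  have t0Vo : val t0^-1%g ^+ (o * k * m) = 1 by rewrite -mulnA exprM val_order expr1n.
  have a'o : a' ^+ (o * k * m) = 1.
    by rewrite -exprM (_ : (k.-1 * _ = k * (k.-1 * o * m))%N) ?exprM ?ak ?expr1n //; lia.
  have uo : u ^+ (o * k * m) = 1 by rewrite mulnC exprM um expr1n.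
  by rewrite !exprMn t0Vo a'o uo !mul1r.
have v1 : v = 1. (* [v] has finite order and coefficient [1] at [1]. *)
  apply: (coef1_eq1 _ vk); first by rewrite !muln_gt0 order_gt0 k_gt0 m_gt0.
  by rewrite coefMg mulg1 invgK coefMl; [exact: a'a | apply: subringX => //; exact: coefA].
exists a, (val t0); split; [split; [exact: coefA | by exists k] | exact: G_val |].
have t0V : val t0^-1%g * val t0 = 1 by rewrite -valM mulVg.
have <- : a * val t0 * v = u.
  transitivity ((a' * a) * (val t0^-1%g * val t0) * u); first by rewrite /v; ring.
  by rewrite a'a t0V !mul1r.
by rewrite v1 mulr1.
Qed.

End FiniteGroupRing.

(** * Decomposition of [G] and of [B] *)

Section GroupRingDecomposition.
Variable R : comNzRingType.

Lemma connected_idem : connected_ring R -> forall e : R, e * e = e -> e = 0 \/ e = 1.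
Proof.
move=> [e1 [e2 [_ idemE]]] e /idemE idem_e.
have /idemE idem0 : (0 : R) * 0 = 0 by rewrite mulr0.
have /idemE idem1 : (1 : R) * 1 = 1 by rewrite mulr1.
have [->|e0] := eqVneq e 0; first by left.
have [->|e1'] := eqVneq e 1; first by right.
move: e0 e1' (oner_neq0 R).
by case: idem0 idem1 idem_e => -> [] -> [] ->; rewrite ?eqxx.
Qed.

Section InD.
Variables (A G : R -> Prop).
Hypotheses (ordR : is_order R) (DAG : in_D A G).

Lemma in_D_units_finite : exists l, uniq l /\ forall x, G x <-> x \in l.
Proof.
have [n [rho rho_inj]] := order_matrix_embedding ordR.
case: DAG => subA _ [injAG _].
by have [l [ul lG]] := nat_map_injective_finite rho_inj subA injAG; exists l.
Qed.

Lemma in_D_units_torsion x : G x -> exists k, (0 < k)%N /\ x ^+ k = 1.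
Proof.
have [l [_ lG]] := in_D_units_finite.
by case: DAG => _ subgG _; apply: (units_torsion subgG lG).
Qed.

Lemma in_D_root_of_unity_decomp u m : connected_ring R -> (0 < m)%N -> u ^+ m = 1 ->
  exists z x, [/\ mu A z, G x & u = z * x].
Proof.
move=> /connected_idem idemR m_gt0 um; have [l [_ lG]] := in_D_units_finite.
have [n [rho rho_inj]] := order_matrix_embedding ordR.
case: DAG => subA subgG [injAG ontoAG].
by apply: (root_of_unity_decomp subA subgG injAG ontoAG lG rho_inj idemR m_gt0 um).
Qed.

End InD.

(* Otherwise [x [1]] and [1 [x]] would be distinct elements of [B[H]] with the same image. *)
Lemma in_D_meet_eq1 (B H : R -> Prop) x : in_D B H -> B x -> H x -> x = 1.
Proof.
case=> subB [H1 _ _] [injBH _] Bx Hx; apply: NNPP => x1.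
pose t := [:: (x, 1); (-1, x)].
have tBH : gr_elt B H t.
  move=> p; rewrite !inE => /orP [] /eqP -> /=; split => //.
  by apply: subringN => //; case: subB.
have ut : uniq (map snd t) by rewrite /= inE andbT; apply/eqP => x1'; apply: x1.
have t0 : gr_eval t = 0 by rewrite /gr_eval !big_cons big_nil /= mulr1 mulN1r addr0 subrr.
have := injBH _ tBH ut t0 (-1, x); rewrite !inE eqxx orbT => /(_ isT) /= /eqP.
by rewrite oppr_eq0 oner_eq0.
Qed.

Lemma nat_map_injective_sub (A G J : R -> Prop) :
  (forall x, J x -> G x) -> nat_map_injective A G -> nat_map_injective A J.
Proof.
move=> JG injAG s sAJ; apply: injAG => p /sAJ [Ap Jp].
by split => //; apply: JG.
Qed.

Lemma nat_map_injective_fiber (B H : R -> Prop) : is_subring B -> nat_map_injective B H ->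
  forall t, gr_elt B H t -> gr_eval t = 0 -> forall h, \sum_(p <- t | p.2 == h) p.1 = 0.
Proof.
move=> subB injBH t tBH t0 h.
have [ht|hNt] := boolP (h \in map snd t); last first.
  by rewrite big1_seq // => p /andP [/eqP ph pt]; case/negP: hNt; rewrite -ph map_f.
pose fiber h := \sum_(p <- t | p.2 == h) p.1.
pose L := [seq (fiber h, h) | h <- undup (map snd t)].
have LBH : gr_elt B H L.
  move=> q /mapP [h' h't ->] /=; split.
    by rewrite /fiber big_seq_cond; apply: subring_sum => // p /andP [/tBH []].
  by move: h't; rewrite mem_undup => /mapP [p /tBH [_ Hp] ->].
have uL : uniq (map snd L) by rewrite -map_comp map_id undup_uniq.
have L0 : gr_eval L = 0.
  rewrite -t0 /gr_eval big_map.
  transitivity (\sum_(h <- undup (map snd t)) \sum_(p <- t) (if p.2 == h then p.1 * p.2 else 0)).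
    apply: eq_bigr => h' _; rewrite /fiber mulr_suml big_mkcond /=.
    by apply: eq_bigr => p _; case: eqP => // ->.
  rewrite exchange_big big_seq [RHS]big_seq; apply: eq_bigr => p pt.
  rewrite -big_mkcond -big_filter (_ : [seq _ <- _ | _] = [:: p.2]) ?big_seq1 //.
  rewrite -(filter_pred1_uniq (undup_uniq (map snd t))) ?mem_undup ?map_f //.
  by apply: eq_filter => h'; exact: eq_sym.
by apply: (injBH _ LBH uL L0 (fiber h, h)); apply/mapP; exists h; rewrite ?mem_undup.
Qed.

Section Regroup.
Variables (A G B H J : R -> Prop).
Hypotheses (subB : is_subring B) (AB : forall a, A a -> B a) (JB : forall j, J j -> B j).
Hypothesis decG : forall g, G g -> exists j h, [/\ J j, H h & g = j * h].

Lemma gr_elt_regroup s : gr_elt A G s -> exists t1 t2,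
  [/\ gr_elt B H t1, gr_elt A J t2, gr_eval s = gr_eval t1 &
      \sum_(p <- t1 | p.2 == 1) p.1 = gr_eval t2].
Proof.
elim: s => [|[a g] s IHs] sAG.
  by exists [::], [::]; split => [p|p||]; rewrite ?in_nil // /gr_eval !big_nil.
have [|t1 [t2 [t1BH t2AJ st1 t1t2]]] := IHs; first by move=> p ps; apply: sAG; rewrite inE ps orbT.
have [/= Aa /decG [j [h [Jj Hh gjh]]]] := sAG (a, g) (mem_head _ _).
exists ((a * j, h) :: t1), (if h == 1 then (a, j) :: t2 else t2); split.
- move=> p; rewrite inE => /orP [/eqP -> | /t1BH //]; split => //.
  by case: subB => _ _ BM; apply/BM; [apply: AB | apply: JB].
- case: (h == 1) => //= p; rewrite inE => /orP [/eqP -> | /t2AJ //]; exact: conj.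
- by rewrite /gr_eval !big_cons -/(gr_eval s) -/(gr_eval t1) st1 /= gjh mulrA.
- by rewrite big_cons /=; case: (h == 1); rewrite // t1t2 /gr_eval big_cons.
Qed.

(* [r [1]] and the regrouped expression of [r] are elements of [B[H]] with the same image,
   so their coefficients at [1] agree. *)
Lemma nat_map_onto_regroup : H 1 -> nat_map_injective B H ->
  nat_map_onto (fun _ => True) A G -> nat_map_onto B A J.
Proof.
move=> H1 injBH ontoAG r Br; have [s [sAG rs]] := ontoAG r I.
have [t1 [t2 [t1BH t2AJ st1 t1t2]]] := gr_elt_regroup sAG.
exists t2; split => //.
have rt1BH : gr_elt B H ((- r, 1) :: t1).
  by move=> p; rewrite inE => /orP [/eqP -> | /t1BH //]; split => //; exact: subringN.
have rt10 : gr_eval ((- r, 1) :: t1) = 0.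
  by rewrite /gr_eval big_cons -/(gr_eval t1) -st1 -rs /= mulr1 addNr.
have := nat_map_injective_fiber subB injBH rt1BH rt10 1.
by rewrite big_cons /= eqxx t1t2 => /eqP; rewrite addrC addr_eq0 opprK => /eqP.
Qed.

End Regroup.

Lemma in_D_units_decomp (A G B H : R -> Prop) :
  is_order R -> connected_ring R -> in_D A G -> in_D B H -> (forall h, H h -> G h) ->
  forall g, G g -> exists j h, [/\ G j /\ mu B j, H h & g = j * h].
Proof.
move=> ordR connR DAG DBH HG g Gg.
have [k [k_gt0 gk]] := in_D_units_torsion ordR DAG Gg.
have [z [x [Bz Hx gzx]]] := in_D_root_of_unity_decomp ordR DBH connR k_gt0 gk.
exists z, x; split => //; split => //.
case: DAG => _ [_ GM GV] _; have [y [Gy xy]] := GV x (HG x Hx).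
have -> : z = g * y by rewrite gzx -mulrA xy mulr1.
exact: GM.
Qed.

End GroupRingDecomposition.

Theorem lemma5p12 (R : comNzRingType) (A G B H : R -> Prop) :
  is_order R -> connected_ring R ->
  in_D A G -> in_D B H ->
  (forall h, H h -> G h) -> (forall a, A a -> B a) ->
  let J := fun x => G x /\ mu B x in
  ((forall g, G g <-> exists j h, [/\ J j, H h & g = j * h]) /\
   (forall x, J x -> H x -> x = 1)) /\
  group_ring_iso B A J.
Proof.
move=> ordR connR DAG DBH HG AB J.
have decG := in_D_units_decomp ordR connR DAG DBH HG.
case: (DAG) => _ [_ GM _] [injAG ontoAG]; case: (DBH) => subB [H1 _ _] [injBH _].
split; [split|split].
- move=> g; split; first exact: decG.
  by move=> [j [h [[Gj _] Hh ->]]]; apply/GM/HG.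
- by move=> x [_ [Bx _]] Hx; apply: in_D_meet_eq1 DBH Bx Hx.
- by apply: nat_map_injective_sub injAG => x [].
- by apply: nat_map_onto_regroup subB AB _ decG H1 injBH ontoAG => x [_ []].
Qed.
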